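(* Let $\delta$ range over $\mathcal D_e^-$ and let $\alpha$ be a smooth map on (an open subset of) $\mathcal D_e^-$ with values in the exact degree-1 differentials, such that $[\delta,\alpha]=\delta\alpha+\alpha\delta=1$. Then, in $\Lambda(T^*\mathcal D_e^-)\widehat\otimes\mathrm{End}(E)$, $$\mathbf d(\alpha\,\mathbf d\delta)=\big[\delta,(\mathbf d\alpha)\,\alpha\,\mathbf d\delta\big]+(\alpha\,\mathbf d\delta)^2 .$$
   Context: $E=\bigoplus_{i=p}^qE^i$ is a finite-dimensional complex $\mathbb Z$-graded vector space. $\mathrm{End}(E)$ is $\mathbb Z$-graded ($\mathrm{End}^k$ raises degree by $k$) and $\mathbb Z_2$-graded by the parity of the degree. $[A,B]=AB-(-1)^{\deg A\deg B}BA$ is the supercommutator. A differential of degree $\pm1$ is an element of $\mathrm{End}^{\pm1}(E)$ with square $0$; it is exact if its cohomology vanishes. $\mathcal D_e^-$ denotes the set of exact differentials of degree $-1$, a smooth manifold (an orbit of the group of degree-preserving automorphisms acting by conjugation), assumed nonempty. $\mathbf d$ is the de Rham operator on $\mathcal D_e^-$, and $\delta$ is viewed as the tautological $\mathrm{End}^{-1}(E)$-valued function, so $\mathbf d\delta$ is an $\mathrm{End}^{-1}(E)$-valued 1-form. Products are taken in the $\mathbb Z_2$-graded tensor product $\Lambda(T^*\mathcal D_e^-)\widehat\otimes\mathrm{End}(E)$, where 1-forms are odd. *)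

From HB Require Import structures.
From mathcomp Require Import all_boot all_order all_algebra.
From mathcomp Require Import all_classical all_reals.
From mathcomp Require Import topology normedtype derive.
From mathcomp Require Import complex.
Set Implicit Arguments. Unset Strict Implicit. Unset Printing Implicit Defensive.
Import Order.TTheory GRing.Theory Num.Theory.
Import numFieldNormedType.Exports.
Local Open Scope ring_scope.
Local Open Scope classical_set_scope.

(* E = C^n with a homogeneous basis: basis vector j has degree [deg j].
   Endomorphisms of E are matrices 'M[R[i]]_n acting on column vectors,
   (A *m v) i = \sum_j A i j * v j. *)

Section Graded.
Variable R : realType.
Local Notation C := (R[i])%C.
Variable n : nat.
Variable deg : 'I_n -> int.
Local Notation M := ('M[C]_n).

(* A is in End^k(E): it raises degree by k *)
Definition homog (k : int) (A : M) : Prop :=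
  forall i j, A i j != 0 -> deg i = (deg j + k)%R.

Definition differential (k : int) (A : M) : Prop := homog k A /\ A *m A = 0.

Definition exact_mx (A : M) : Prop :=
  forall v : 'cV[C]_n, A *m v = 0 -> exists w : 'cV[C]_n, v = A *m w.

Definition De_minus : set M := [set A | differential (-1) A /\ exact_mx A].
Definition De_plus : set M := [set A | differential 1 A /\ exact_mx A].

(* Z_2-grading of End(E): even and odd parts, and the parity twist
   A |-> (-1)^{|A|} A extended linearly. *)
Definition evenpart (A : M) : M :=
  \matrix_(i, j) (if odd `|(deg i - deg j)%R|%N then 0 else A i j).
Definition oddpart (A : M) : M :=
  \matrix_(i, j) (if odd `|(deg i - deg j)%R|%N then A i j else 0).
Definition twist (A : M) : M := evenpart A - oddpart A.

(* supercommutator [A,B] = AB - (-1)^{|A||B|} BA, extended bilinearly *)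
Definition scomm (A B : M) : M :=
  A *m B - (evenpart B *m A + oddpart B *m evenpart A - oddpart B *m oddpart A).

(* Values at a point of End(E)-valued forms of degree 0,1,2, evaluated on
   tangent vectors (tangent vectors of D_e^- are elements of End^{-1}(E)). *)
Definition form0 := M.
Definition form1 := M -> M.
Definition form2 := M -> M -> M.

(* Products in Lambda(T^* D) (x)^ End(E), with
   (phi (x) A)(psi (x) B) = (-1)^{|A| deg psi} (phi /\ psi) (x) AB  and
   (phi /\ psi)(u,v) = phi(u) psi(v) - phi(v) psi(u). *)
Definition mul01 (A : form0) (w : form1) : form1 := fun u => twist A *m w u.
Definition mul10 (w : form1) (A : form0) : form1 := fun u => w u *m A.
Definition mul11 (w e : form1) : form2 :=
  fun u v => twist (w u) *m e v - twist (w v) *m e u.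
Definition add2 (X Y : form2) : form2 := fun u v => X u v + Y u v.
(* supercommutator of a 0-form with a 2-form (total parity; 2-forms are even) *)
Definition scomm02 (A : form0) (X : form2) : form2 := fun u v => scomm A (X u v).

(* the End^{-1}(E)-valued 1-form d(delta), delta the tautological function *)
Definition ddelta : form1 := fun u => u.

Definition has_mderiv (g : R -> M) (t0 : R) (D : M) : Prop :=
  forall i j,
    is_derive t0 (1 : R) (fun t => complex.Re (g t i j)) (complex.Re (D i j)) /\
    is_derive t0 (1 : R) (fun t => complex.Im (g t i j)) (complex.Im (D i j)).

Definition curve_through (U : set M) (x u : M) (g : R -> M) : Prop :=
  (forall t, U (g t)) /\ g 0 = x /\ has_mderiv g 0 u.

Definition tangent (U : set M) (x u : M) : Prop := exists g, curve_through U x u g.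

Definition rel_open (U : set M) : Prop :=
  U `<=` De_minus /\
  forall x, U x -> exists eps : R, 0 < eps /\
    forall y, De_minus y -> (forall i j, `|y i j - x i j| < (eps%:C)%C) -> U y.

Definition is_differential (U : set M) (alpha : M -> M) (Dalpha : M -> M -> M) : Prop :=
  forall x u g, U x -> curve_through U x u g -> has_mderiv (alpha \o g) 0 (Dalpha x u).

Definition is_form_deriv (U : set M) (w : M -> form1) (Dw : M -> M -> M -> M) : Prop :=
  forall x u g, U x -> curve_through U x u g ->
    forall v, has_mderiv (fun t => w (g t) v) 0 (Dw x u v).

Definition dform1 (Dw : M -> M -> M -> M) (x : M) : form2 :=
  fun u v => Dw x u v - Dw x v u.

End Graded.

(* Along a curve through x with velocity u, differentiating delta^2 = 0 gives
   u x + x u = 0, and differentiating delta alpha + alpha delta = 1 gives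
   (u A + A u) + (x P_u + P_u x) = 0, where A = alpha x and P_u = (d alpha)(u).
   Since alpha and d delta are odd, alpha d delta evaluates to v |-> - A v, so
   its exterior derivative is (u, v) |-> P_v u - P_u v.  On the other side,
   P_u A v is odd, and the two relations give
   x (P_u A v) + (P_u A v) x = - P_u v - A u A v;
   the quadratic terms cancel against (alpha d delta)^2. *)

From HB Require Import structures.
From mathcomp Require Import all_boot all_order all_algebra.
From mathcomp Require Import all_classical all_reals.
From mathcomp Require Import topology normedtype derive.
From mathcomp Require Import complex.
From mathcomp Require Import ring.
Import Order.TTheory GRing.Theory Num.Theory.
Import numFieldNormedType.Exports.
Local Open Scope ring_scope.
Local Open Scope classical_set_scope.
Set Implicit Arguments. Unset Strict Implicit.

Section ComplexDerivative.
Variable R : realType.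
Local Notation C := (R[i])%C.

Definition has_cderiv (f : R -> C) (t0 : R) (d : C) :=
  is_derive t0 (1 : R) (fun t => complex.Re (f t)) (complex.Re d) /\
  is_derive t0 (1 : R) (fun t => complex.Im (f t)) (complex.Im d).

Lemma eq_is_derive (f g : R -> R) t0 d d' : f =1 g -> d = d' ->
  is_derive t0 (1 : R) f d -> is_derive t0 (1 : R) g d'.
Proof. by move=> /funext -> ->. Qed.

Lemma eq_has_cderiv (f g : R -> C) t0 d : f =1 g ->
  has_cderiv f t0 d -> has_cderiv g t0 d.
Proof. by move=> /funext ->. Qed.

Lemma has_cderiv_unique f t0 d1 d2 :
  has_cderiv f t0 d1 -> has_cderiv f t0 d2 -> d1 = d2.
Proof.
case: d1 d2 => [a1 b1] [a2 b2] [ha1 hb1] [ha2 hb2] /=.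
have /= <- := @derive_val _ _ _ _ _ _ _ ha1.
have /= <- := @derive_val _ _ _ _ _ _ _ hb1.
have /= -> := @derive_val _ _ _ _ _ _ _ ha2.
by have /= -> := @derive_val _ _ _ _ _ _ _ hb2.
Qed.

Lemma has_cderiv_cst c t0 : has_cderiv (fun _ => c) t0 0.
Proof. by split; apply: is_derive_cst. Qed.

Lemma has_cderivD f g t0 a b : has_cderiv f t0 a -> has_cderiv g t0 b ->
  has_cderiv (fun t => f t + g t) t0 (a + b).
Proof.
case: a b => [a1 a2] [b1 b2] [fa1 fa2] [gb1 gb2]; split.
- apply: eq_is_derive (is_deriveD fa1 gb1) => // t.
  change (complex.Re (f t) + complex.Re (g t) = complex.Re (f t + g t)).
  by case: (f t) => ? ?; case: (g t).
- apply: eq_is_derive (is_deriveD fa2 gb2) => // t.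
  change (complex.Im (f t) + complex.Im (g t) = complex.Im (f t + g t)).
  by case: (f t) => ? ?; case: (g t).
Qed.

Lemma has_cderivM f g t0 a b : has_cderiv f t0 a -> has_cderiv g t0 b ->
  has_cderiv (fun t => f t * g t) t0 (f t0 * b + a * g t0).
Proof.
case: a b => [a1 a2] [b1 b2] [fa1 fa2] [gb1 gb2]; split.
- apply: eq_is_derive (is_deriveB (is_deriveM fa1 gb1) (is_deriveM fa2 gb2)).
  + move=> t; change (complex.Re (f t) * complex.Re (g t)
                      - complex.Im (f t) * complex.Im (g t) = complex.Re (f t * g t)).
    by case: (f t) => ? ?; case: (g t).
  + by rewrite /GRing.scale /=; case: (f t0) (g t0) => [? ?] [? ?] /=; ring.
- apply: eq_is_derive (is_deriveD (is_deriveM fa1 gb2) (is_deriveM fa2 gb1)).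
  + move=> t; change (complex.Re (f t) * complex.Im (g t)
                      + complex.Im (f t) * complex.Re (g t) = complex.Im (f t * g t)).
    by case: (f t) => ? ?; case: (g t).
  + by rewrite /GRing.scale /=; case: (f t0) (g t0) => [? ?] [? ?] /=; ring.
Qed.

Lemma has_cderiv_sum m (h : 'I_m -> R -> C) t0 dh :
  (forall k, has_cderiv (h k) t0 (dh k)) ->
  has_cderiv (fun t => \sum_k h k t) t0 (\sum_k dh k).
Proof.
elim: m h dh => [|m IH] h dh hd.
  rewrite big_ord0; apply: eq_has_cderiv (has_cderiv_cst 0 t0) => t.
  by rewrite big_ord0.
rewrite big_ord_recr; apply: eq_has_cderiv; last first.
  by apply: has_cderivD (hd _); apply: IH => k; apply: hd.
by move=> t /=; rewrite big_ord_recr.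
Qed.

End ComplexDerivative.

Section MatrixDerivative.
Variables (R : realType) (n : nat).
Local Notation M := 'M[R[i]%C]_n.

Lemma has_mderiv_unique (g : R -> M) t0 D1 D2 :
  has_mderiv g t0 D1 -> has_mderiv g t0 D2 -> D1 = D2.
Proof.
by move=> h1 h2; apply/matrixP => i j; apply: has_cderiv_unique (h1 i j) (h2 i j).
Qed.

Lemma has_mderiv_cst (A : M) t0 : has_mderiv (fun _ => A) t0 0.
Proof. by move=> i j; rewrite mxE; apply: has_cderiv_cst. Qed.

Lemma eq_has_mderiv (g h : R -> M) t0 D : g =1 h ->
  has_mderiv g t0 D -> has_mderiv h t0 D.
Proof. by move=> /funext ->. Qed.

Lemma has_mderivD (g h : R -> M) t0 A B :
  has_mderiv g t0 A -> has_mderiv h t0 B ->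
  has_mderiv (fun t => g t + h t) t0 (A + B).
Proof.
move=> gA hB i j; rewrite mxE.
by apply: eq_has_cderiv (has_cderivD (gA i j) (hB i j)) => t; rewrite mxE.
Qed.

Lemma has_mderivM (g h : R -> M) t0 A B :
  has_mderiv g t0 A -> has_mderiv h t0 B ->
  has_mderiv (fun t => g t *m h t) t0 (g t0 *m B + A *m h t0).
Proof.
move=> gA hB i j; rewrite !mxE -big_split /=.
apply: eq_has_cderiv (has_cderiv_sum (fun k => has_cderivM (gA i k) (hB k j))).
by move=> t; rewrite mxE.
Qed.

Lemma has_mderiv_homog (deg : 'I_n -> int) k (g : R -> M) t0 D :
  (forall t, homog deg k (g t)) -> has_mderiv g t0 D -> homog deg k D.
Proof.
move=> gk gD i j; apply: contraNeq => ne.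
have gij0 t : g t i j = 0 by apply/eqP; apply: contraNT ne => /gk ->.
apply/eqP/(has_cderiv_unique (gD i j)).
by apply: eq_has_cderiv (has_cderiv_cst 0 t0) => t; rewrite gij0.
Qed.

End MatrixDerivative.

Section Grading.
Variables (R : realType) (n : nat) (deg : 'I_n -> int).
Local Notation M := 'M[R[i]%C]_n.
Local Notation homog := (homog deg).

Lemma homog_mulmx k l (A B : M) : homog k A -> homog l B -> homog (k + l) (A *m B).
Proof.
move=> hA hB i j; rewrite mxE; apply: contraNeq => ne.
rewrite big1 // => m _.
have [->|Aim] := eqVneq (A i m) 0; first by rewrite mul0r.
have [->|Bmj] := eqVneq (B m j) 0; first by rewrite mulr0.
by case/eqP: ne; rewrite (hA _ _ Aim) (hB _ _ Bmj) -addrA (addrC l).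
Qed.

Lemma homogD k (A B : M) : homog k A -> homog k B -> homog k (A + B).
Proof.
move=> hA hB i j; rewrite mxE; apply: contraNeq => ne.
have [Aij|/hA] := eqVneq (A i j) 0; last by move/eqP: ne.
have [Bij|/hB] := eqVneq (B i j) 0; last by move/eqP: ne.
by rewrite Aij Bij addr0.
Qed.

Lemma homogN k (A : M) : homog k A -> homog k (- A).
Proof. by move=> hA i j; rewrite mxE oppr_eq0; apply: hA. Qed.

Lemma homog_parts k (A : M) : homog k A ->
  evenpart deg A = (if odd `|k|%N then 0 else A) /\
  oddpart deg A = (if odd `|k|%N then A else 0).
Proof.
move=> hA; split; apply/matrixP => i j; rewrite !mxE;
  have [ok|ok] := boolP (odd `|k|%N); rewrite ?(negbTE ok) ?ok ?mxE;
  have [->|/hA ->] := eqVneq (A i j) 0;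
  by rewrite ?if_same // addrAC subrr add0r ?(negbTE ok) ?ok.
Qed.

Lemma twist_homog k (A : M) : homog k A ->
  twist deg A = (if odd `|k|%N then - A else A).
Proof.
rewrite /twist => /homog_parts[-> ->].
by case: ifP; rewrite ?sub0r ?subr0.
Qed.

Lemma scomm_odd k l (A B : M) : homog k A -> homog l B ->
  odd `|k|%N -> odd `|l|%N -> scomm deg A B = A *m B + B *m A.
Proof.
move=> /homog_parts[eA oA] /homog_parts[eB oB] ok ol.
by rewrite /scomm eA oA eB oB ok ol mul0mx mulmx0 add0r sub0r opprK.
Qed.

End Grading.

Section RingIdentity.
Variable Rg : pzRingType.

Lemma anticomm_Dalpha_alpha (x A P u v : Rg) :
  x * A + A * x = 1 -> A * A = 0 -> v * x + x * v = 0 ->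
  u * A + A * u + (x * P + P * x) = 0 ->
  x * (P * A * v) + P * A * v * x = - (P * v) - A * u * (A * v).
Proof.
move=> xA AA vx uAxP.
have vx' : v * x = - (x * v) by apply/eqP; rewrite -addr_eq0 vx.
have Ax : A * x = 1 - x * A by rewrite -xA [x * A + _]addrC addrK.
have xPPx : x * P + P * x = - (u * A + A * u).
  by apply/eqP; rewrite -addr_eq0 addrC uAxP.
have PAvx : P * A * v * x = P * x * A * v - P * v.
  rewrite -mulrA vx' mulrN mulrA -(mulrA P A x) Ax mulrBr mulr1 mulrBl opprB.
  by rewrite !mulrA.
rewrite PAvx addrA !mulrA -!mulrDl xPPx mulNr !mulrDl -(mulrA u) AA mulr0 add0r.
by rewrite mulNr addrC.
Qed.

Lemma wedge_anticomm_identity (x A Pu Pv u v : Rg) :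
  x * A + A * x = 1 -> A * A = 0 -> u * x + x * u = 0 -> v * x + x * v = 0 ->
  u * A + A * u + (x * Pu + Pu * x) = 0 -> v * A + A * v + (x * Pv + Pv * x) = 0 ->
  x * (Pu * A * v - Pv * A * u) + (Pu * A * v - Pv * A * u) * x
    + (A * u * (A * v) - A * v * (A * u)) = Pv * u - Pu * v.
Proof.
move=> xA AA ux vx uAxP vAxP.
rewrite mulrBr mulrBl [X in X + _]addrACA -opprD.
rewrite (anticomm_Dalpha_alpha xA AA vx uAxP) (anticomm_Dalpha_alpha xA AA ux vAxP).
by rewrite addrAC subrKA opprB subrKA opprK addrC.
Qed.

End RingIdentity.

Section DifferentiatedRelations.
Variables (R : realType) (n : nat) (deg : 'I_n -> int).
Local Notation M := 'M[R[i]%C]_n.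
Variables (U : set M) (alpha : M -> M) (Dalpha : M -> M -> M).
Variable Domega : M -> M -> M -> M.
Hypothesis U_sub : U `<=` De_minus deg.
Hypothesis alpha_exact : forall y, U y -> De_plus deg (alpha y).
Hypothesis alpha_homotopy : forall y, U y -> y *m alpha y + alpha y *m y = 1%:M.
Hypothesis Dalpha_diff : is_differential U alpha Dalpha.
Hypothesis Domega_diff :
  is_form_deriv U (fun y => mul01 deg (alpha y) (@ddelta R n)) Domega.

Lemma twist_alpha y : U y -> twist deg (alpha y) = - alpha y.
Proof. by case/alpha_exact => -[/twist_homog ->]. Qed.

Variables (x w : M) (g : R -> M).
Hypotheses (Ux : U x) (gw : curve_through U x w g).

Lemma velocity_homog : homog deg (-1) w.
Proof.
case: gw => gU [_ gw'].
by apply: has_mderiv_homog gw' => t; have [[]] := U_sub (gU t).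
Qed.

Lemma velocity_anticomm : w *m x + x *m w = 0.
Proof.
case: gw => gU [g0 gw'].
have g2 : has_mderiv (fun t => g t *m g t) 0 0.
  by apply: eq_has_mderiv (has_mderiv_cst 0 0) => t; have [[_ ->]] := U_sub (gU t).
by rewrite -g0 addrC; apply: has_mderiv_unique (has_mderivM gw' gw') g2.
Qed.

Lemma Dalpha_homog : homog deg 1 (Dalpha x w).
Proof.
case: gw => gU [_ gw'].
by apply: has_mderiv_homog (Dalpha_diff Ux gw) => t; have [[]] := alpha_exact (gU t).
Qed.

Lemma velocity_alpha_anticomm :
  w *m alpha x + alpha x *m w + (x *m Dalpha x w + Dalpha x w *m x) = 0.
Proof.
case: gw => gU [g0 gw'].
have ag := Dalpha_diff Ux gw.
have one : has_mderiv (fun t => g t *m alpha (g t) + alpha (g t) *m g t) 0 0.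
  by apply: eq_has_mderiv (has_mderiv_cst 1%:M 0) => t; rewrite alpha_homotopy.
have := has_mderiv_unique (has_mderivD (has_mderivM gw' ag) (has_mderivM ag gw')) one.
by rewrite /= g0 => <-; rewrite addrACA (addrC (x *m _)).
Qed.

Lemma Domega_velocity v : Domega x w v = - (Dalpha x w *m v).
Proof.
case: gw => gU [_ _].
apply: has_mderiv_unique (Domega_diff Ux gw v) _.
have := has_mderivM (Dalpha_diff Ux gw) (has_mderiv_cst (- v) 0).
rewrite mulmx0 add0r mulmxN; apply: eq_has_mderiv => t /=.
by rewrite /mul01 /ddelta twist_alpha // mulNmx mulmxN.
Qed.

End DifferentiatedRelations.

Theorem mainTheorem11 (R : realType) (n : nat) (deg : 'I_n -> int)
  (U : set 'M[R[i]%C]_n) (alpha : 'M[R[i]%C]_n -> 'M[R[i]%C]_n)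
  (Dalpha : 'M[R[i]%C]_n -> 'M[R[i]%C]_n -> 'M[R[i]%C]_n)
  (Domega : 'M[R[i]%C]_n -> 'M[R[i]%C]_n -> 'M[R[i]%C]_n -> 'M[R[i]%C]_n) :
  rel_open deg U ->
  (forall x, U x -> De_plus deg (alpha x)) ->
  (forall x, U x -> x *m alpha x + alpha x *m x = 1%:M) ->
  is_differential U alpha Dalpha ->
  is_form_deriv U (fun y => mul01 deg (alpha y) (@ddelta R n)) Domega ->
  forall x u v, U x -> tangent U x u -> tangent U x v ->
    dform1 Domega x u v =
    add2 (scomm02 deg x (mul11 deg (mul10 (Dalpha x) (alpha x)) (@ddelta R n)))
         (mul11 deg (mul01 deg (alpha x) (@ddelta R n))
                    (mul01 deg (alpha x) (@ddelta R n))) u v.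
Proof.
move=> [U_sub _] alpha_exact homotopy Dalpha_diff Domega_diff x u v Ux [gu gu_x] [gv gv_x].
have [[x_homog _] _] := U_sub x Ux.
have [[A_homog A2] _] := alpha_exact x Ux.
have u_homog := velocity_homog U_sub gu_x.
have v_homog := velocity_homog U_sub gv_x.
have Pu_homog := Dalpha_homog alpha_exact Dalpha_diff Ux gu_x.
have Pv_homog := Dalpha_homog alpha_exact Dalpha_diff Ux gv_x.
rewrite /dform1 /add2 /scomm02 /mul11 /mul10 /mul01 /ddelta.
rewrite (Domega_velocity alpha_exact Dalpha_diff Domega_diff Ux gu_x).
rewrite (Domega_velocity alpha_exact Dalpha_diff Domega_diff Ux gv_x).
rewrite (twist_alpha alpha_exact Ux) !(twist_homog (homog_mulmx Pu_homog A_homog)).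
rewrite !(twist_homog (homog_mulmx Pv_homog A_homog)).
rewrite !(twist_homog (homog_mulmx (homogN A_homog) u_homog)).
rewrite !(twist_homog (homog_mulmx (homogN A_homog) v_homog)) /=.
rewrite (scomm_odd x_homog (homogD (homog_mulmx (homog_mulmx Pu_homog A_homog) v_homog)
  (homogN (homog_mulmx (homog_mulmx Pv_homog A_homog) u_homog)))) //.
rewrite !mulNmx !mulmxN !opprK !mulmxE addrC.
apply/esym/wedge_anticomm_identity.
- by rewrite -mulmxE -idmxE homotopy.
- by rewrite -mulmxE.
- by rewrite -mulmxE (velocity_anticomm U_sub gu_x).
- by rewrite -mulmxE (velocity_anticomm U_sub gv_x).
- by rewrite -mulmxE (velocity_alpha_anticomm homotopy Dalpha_diff Ux gu_x).
- by rewrite -mulmxE (velocity_alpha_anticomm homotopy Dalpha_diff Ux gv_x).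
Qed.
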